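(* If $A,B\in\mathrm{Sym}_{>}(\mathbb C^{2d})$, then $A\#B$ is well defined and $A\#B\in\mathrm{Sym}_{>}(\mathbb C^{2d})$; thus $(\mathrm{Sym}_{>}(\mathbb C^{2d}),\#)$ is a semigroup. Moreover, if $A,B\in\mathrm{Sym}^{\rm qnd}_{>}(\mathbb C^{2d})$, then $A\#B\in\mathrm{Sym}^{\rm qnd}_{>}(\mathbb C^{2d})$, so $(\mathrm{Sym}^{\rm qnd}_{>}(\mathbb C^{2d}),\#)$ is also a semigroup.
   Context: Let $d\ge 1$, let $\mathbb 1$ denote an identity matrix, and let $\theta=\begin{bmatrix}0&-i\mathbb 1_d\\ i\mathbb 1_d&0\end{bmatrix}$ ($2d\times 2d$). $\mathrm{Sym}(\mathbb C^{n})$ denotes the set of complex symmetric $n\times n$ matrices; $\mathrm{Sym}_{>}(\mathbb C^{n})=\{A\in\mathrm{Sym}(\mathbb C^n):\ \Re A \text{ is positive definite}\}$ where $\Re A=(A+\bar A)/2$; $\mathrm{Sym}^{\rm qnd}_{>}(\mathbb C^{2d})=\{A\in\mathrm{Sym}_{>}(\mathbb C^{2d}):\det(\mathbb 1+A\theta)\ne0\}$. For $A,B\in\mathrm{Sym}(\mathbb C^{2d})$ such that $M=\begin{bmatrix}\theta A\theta&-\theta\\ \theta&\theta B\theta\end{bmatrix}$ is invertible, $A\#B:=J^TM^{-1}J$ with $J=\begin{bmatrix}-\mathbb 1_{2d}\\ \mathbb 1_{2d}\end{bmatrix}$; $A\#B$ is well defined iff $M$ is invertible. *)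

(* Complex numbers are modelled by an arbitrary
   numClosedFieldType C (e.g. algC); the statement is proved for all such C. *)
From HB Require Import structures.
From mathcomp Require Import all_boot all_order all_algebra.
Set Implicit Arguments. Unset Strict Implicit. Unset Printing Implicit Defensive.
Import Order.TTheory GRing.Theory Num.Theory.
Local Open Scope ring_scope.

Definition is_sym (C : numClosedFieldType) (n : nat) (A : 'M[C]_n) : Prop :=
  A^T = A.

Definition ReM (C : numClosedFieldType) (n : nat) (A : 'M[C]_n) : 'M[C]_n :=
  2^-1 *: (A + map_mx Num.conj A).

Definition posdef (C : numClosedFieldType) (n : nat) (M : 'M[C]_n) : Prop :=
  forall x : 'cV[C]_n, (forall i, x i 0 \is Num.real) -> x != 0 ->
    0 < (x^T *m M *m x) 0 0.

Definition SymPos (C : numClosedFieldType) (n : nat) (A : 'M[C]_n) : Prop :=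
  is_sym A /\ posdef (ReM A).

Definition theta (C : numClosedFieldType) (d : nat) : 'M[C]_(d + d) :=
  block_mx 0 (- ('i *: 1%:M)) ('i *: 1%:M) 0.

Definition SymPosQnd (C : numClosedFieldType) (d : nat) (A : 'M[C]_(d + d)) : Prop :=
  SymPos A /\ \det (1%:M + A *m theta C d) != 0.

Definition sharpM (C : numClosedFieldType) (d : nat) (A B : 'M[C]_(d + d))
  : 'M[C]_((d + d) + (d + d)) :=
  let t := theta C d in block_mx (t *m A *m t) (- t) t (t *m B *m t).

Definition sharpJ (C : numClosedFieldType) (d : nat) : 'M[C]_((d + d) + (d + d), d + d) :=
  col_mx (- 1%:M) 1%:M.

Definition sharp_defined (C : numClosedFieldType) (d : nat) (A B : 'M[C]_(d + d)) : Prop :=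
  sharpM A B \in unitmx.

Definition sharp (C : numClosedFieldType) (d : nat) (A B : 'M[C]_(d + d)) : 'M[C]_(d + d) :=
  (sharpJ C d)^T *m invmx (sharpM A B) *m sharpJ C d.

From Pilot Require Import Defs.
From HB Require Import structures.
From mathcomp Require Import all_boot all_order all_algebra.
From mathcomp Require Import ring.
Import Order.TTheory GRing.Theory Num.Theory.
Local Open Scope ring_scope.
Set Implicit Arguments. Unset Strict Implicit.

(* Two facts drive the proof.  First, with T = theta (so T *m T = 1), the
   product A # B is characterised by a linear system: whenever
   T (v - u) = A u + B v, one has (A # B) (u + T B v) = A u + B v, and when
   sharpM A B is invertible every y is of the form u + T B v.  Chaining two such
   systems gives associativity, and the same system shows that A # B + T is
   injective when A + T and B + T are; since 1 + A T = (A + T) T this is the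
   condition det (1 + A T) != 0.  Second, for symmetric A, positivity of Re A on
   real vectors is equivalent to Re (z^* A z) > 0 for all complex z != 0.  This
   accretivity passes to sharpM A B (the off-diagonal blocks only contribute a
   purely imaginary term), hence sharpM A B is invertible, its inverse is
   accretive, and so is A # B = J^T (sharpM A B)^-1 J because J is real and
   injective. *)

Lemma ker0_unitmx (F : fieldType) n (N : 'M[F]_n) :
  (forall x : 'cV_n, N *m x = 0 -> x = 0) -> N \in unitmx.
Proof.
move=> N_inj; rewrite unitmxE unitfE -det_tr; apply/det0P => -[v nz_v].
move/(congr1 trmx); rewrite trmx_mul trmxK trmx0 => /N_inj /eqP.
by rewrite trmx_eq0 (negPf nz_v).
Qed.

Lemma unitmx_ker0 (R : comUnitRingType) n p (N : 'M[R]_n) (x : 'M[R]_(n, p)) :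
  N \in unitmx -> N *m x = 0 -> x = 0.
Proof. by move=> unitN Nx0; rewrite -(mulKmx unitN x) Nx0 mulmx0. Qed.

Section Accretive.
Variable C : numClosedFieldType.
Local Notation cj := (map_mx (@Num.conj C)).
Local Notation real_vec x := (forall i, x i 0 \is Num.real).

Definition hform n (N : 'M[C]_n) (z : 'cV[C]_n) : C := ((cj z)^T *m N *m z) 0 0.

Definition accretive n (N : 'M[C]_n) : Prop :=
  forall z : 'cV_n, z != 0 -> 0 < 'Re (hform N z).

Lemma hform0 n (N : 'M[C]_n) : hform N 0 = 0.
Proof. by rewrite /hform mulmx0 mxE. Qed.

Lemma hform_mulmx m n (N : 'M[C]_m) (P : 'M[C]_(m, n)) (z : 'cV[C]_n) :
  hform N (P *m z) = hform ((cj P)^T *m N *m P) z.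
Proof. by rewrite /hform map_mxM trmx_mul !mulmxA. Qed.

Lemma conj_form m n (x : 'cV[C]_m) (N : 'M[C]_(m, n)) (y : 'cV[C]_n) :
  (((cj x)^T *m N *m y) 0 0)^* = ((cj y)^T *m (cj N)^T *m x) 0 0.
Proof.
have cjK : cj (cj x) = x by apply/matrixP => i j; rewrite !mxE conjCK.
have -> : (cj y)^T *m (cj N)^T *m x = (cj ((cj x)^T *m N *m y))^T.
  by rewrite !map_mxM !trmx_mul -map_trmx trmxK cjK mulmxA.
by rewrite !mxE.
Qed.

Lemma accretive_ge0 n (N : 'M[C]_n) z : accretive N -> 0 <= 'Re (hform N z).
Proof.
move=> accN; have [->|nz_z] := eqVneq z 0; last exact/ltW/accN.
by rewrite hform0 raddf0.
Qed.

Lemma accretive_unitmx n (N : 'M[C]_n) : accretive N -> N \in unitmx.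
Proof.
move=> accN; apply: ker0_unitmx => z Nz0; apply: contraNeq (accN z) _.
by rewrite /hform -mulmxA Nz0 mulmx0 mxE raddf0 ltxx.
Qed.

Lemma accretive_invmx n (N : 'M[C]_n) : accretive N -> accretive (invmx N).
Proof.
move=> accN w nz_w; have unitN := accretive_unitmx accN.
pose z := invmx N *m w; have wE : w = N *m z by rewrite mulKVmx.
have nz_z : z != 0 by apply: contraNneq nz_w => z0; rewrite wE z0 mulmx0.
by rewrite wE /hform -mulmxA mulKmx // map_mxM trmx_mul -conj_form Re_conj accN.
Qed.

Lemma accretive_mulmx m n (N : 'M[C]_m) (P : 'M[C]_(m, n)) :
  (forall z : 'cV_n, P *m z = 0 -> z = 0) ->
  accretive N -> accretive ((cj P)^T *m N *m P).
Proof.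
move=> P_inj accN z nz_z; rewrite -hform_mulmx accN //.
by apply: contraNneq nz_z => /P_inj ->.
Qed.

Lemma conj_real_vec n (x : 'cV[C]_n) : real_vec x -> cj x = x.
Proof. by move=> x_real; apply/matrixP => i j; rewrite mxE ord1 conj_Creal. Qed.

Lemma ReM_form n (N : 'M[C]_n) (x : 'cV[C]_n) : real_vec x ->
  (x^T *m Defs.ReM N *m x) 0 0 = 'Re (hform N x).
Proof.
move=> x_real; rewrite /Defs.ReM /hform conj_real_vec // ReE mulrC.
rewrite -scalemxAr -scalemxAl mxE mulmxDr mulmxDl mxE; congr (_ * (_ + _)).
have -> : ((x^T *m N *m x) 0 0)^* = (cj (x^T *m N *m x)) 0 0 by rewrite [RHS]mxE.
by rewrite !map_mxM -map_trmx conj_real_vec.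
Qed.

Lemma accretive_posdef_ReM n (N : 'M[C]_n) : accretive N -> posdef (Defs.ReM N).
Proof. by move=> accN x x_real nz_x; rewrite ReM_form // accN. Qed.

Lemma mx_rect m n (M : 'M[C]_(m, n)) :
  M = map_mx (fun c => 'Re c) M + 'i *: map_mx (fun c => 'Im c) M.
Proof. by apply/matrixP => i j; rewrite !mxE -Crect. Qed.

Lemma hform_sym n (A : 'M[C]_n) (z : 'cV[C]_n) : Defs.is_sym A ->
  hform A z =
  hform A (map_mx (fun c => 'Re c) z) + hform A (map_mx (fun c => 'Im c) z).
Proof.
move=> symA; set x := map_mx _ z; set y := map_mx _ z.
have x_real : real_vec x by move=> i; rewrite mxE Creal_Re.
have y_real : real_vec y by move=> i; rewrite mxE Creal_Im.
have cj_zE : cj z = x - 'i *: y.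
  apply/matrixP => i j; rewrite !mxE {1}[z i j]Crect rmorphD /= rmorphM /= conjCi.
  by rewrite !conj_Creal ?Creal_Re ?Creal_Im // mulNr.
have yAx : y^T *m A *m x = x^T *m A *m y.
  have tr_1x1 (M : 'M[C]_1) : M^T = M by apply/matrixP => i j; rewrite !ord1 mxE.
  by rewrite -[LHS]tr_1x1 !trmx_mul trmxK symA mulmxA.
rewrite /hform (conj_real_vec x_real) (conj_real_vec y_real) cj_zE.
rewrite [z]mx_rect -/x -/y raddfB /=.
rewrite !linearZ /= scalerN !mulmxBl !mulmxDr -!scalemxAl -!scalemxAr yAx.
move: (x^T *m A *m x) (x^T *m A *m y) (y^T *m A *m y) => a b e.
by rewrite !mxE mulrA -expr2 sqrCi mulN1r; ring.
Qed.

Lemma SymPosE n (A : 'M[C]_n) : SymPos A <-> Defs.is_sym A /\ accretive A.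
Proof.
split=> [[symA posA] | [symA accA]]; last first.
  by split=> //; apply: accretive_posdef_ReM.
split=> // z nz_z; rewrite hform_sym // raddfD /=.
set x := map_mx _ z; set y := map_mx _ z.
have Re_ge0 (w : 'cV_n) : real_vec w -> 0 <= 'Re (hform A w).
  move=> w_real; have [->|nz_w] := eqVneq w 0; first by rewrite hform0 raddf0.
  by rewrite -ReM_form // ltW ?posA.
have x_real : real_vec x by move=> i; rewrite mxE Creal_Re.
have y_real : real_vec y by move=> i; rewrite mxE Creal_Im.
have [x0|nz_x] := eqVneq x 0; last by rewrite ltr_pwDl ?Re_ge0 // -ReM_form ?posA.
have nz_y : y != 0.
  by apply: contraNneq nz_z => y0; rewrite [z]mx_rect -/x -/y x0 y0 scaler0 addr0.
by rewrite ltr_pwDr ?Re_ge0 // -ReM_form ?posA.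
Qed.

End Accretive.

Section Theta.
Variables (C : numClosedFieldType) (d : nat).
Local Notation T := (theta C d).
Local Notation cj := (map_mx (@Num.conj C)).

Lemma thetaE : T = block_mx 0 (- 'i%:M) 'i%:M 0.
Proof. by rewrite /theta !scalemx1. Qed.

Lemma thetaK : T *m T = 1%:M.
Proof.
rewrite thetaE mulmx_block !mul0mx !mulmx0 !add0r !addr0 mulNmx mulmxN.
by rewrite -!scalar_mxM -expr2 sqrCi raddfN opprK -scalar_mx_block.
Qed.

Lemma mulKtheta n (x : 'M[C]_(d + d, n)) : T *m (T *m x) = x.
Proof. by rewrite mulmxA thetaK mul1mx. Qed.

Lemma theta_eq0 n (x : 'M[C]_(d + d, n)) : (T *m x == 0) = (x == 0).
Proof. by rewrite -[RHS](inj_eq (can_inj (@mulKtheta n))) mulmx0. Qed.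

Lemma theta_unit : T \in unitmx.
Proof. by case: (mulmx1_unit thetaK). Qed.

Lemma tr_theta : T^T = - T.
Proof.
rewrite thetaE tr_block_mx opp_block_mx !trmx0 oppr0 !tr_scalar_mx.
by rewrite raddfN /= tr_scalar_mx opprK.
Qed.

Lemma conj_theta : cj T = - T.
Proof.
rewrite thetaE map_block_mx !map_mx0 map_mxN !map_scalar_mx /= conjCi.
by rewrite opp_block_mx oppr0 raddfN.
Qed.

Lemma adj_theta : (cj T)^T = T.
Proof. by rewrite conj_theta raddfN /= tr_theta opprK. Qed.

End Theta.

Section SharpEquations.
Variables (C : numClosedFieldType) (d : nat).
Local Notation T := (theta C d).
Local Notation J := (sharpJ C d).
Implicit Types (A B : 'M[C]_(d + d)).

Lemma mul_sharpJ n (y : 'M[C]_(d + d, n)) : J *m y = col_mx (- y) y.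
Proof. by rewrite /sharpJ mul_col_mx mulNmx !mul1mx. Qed.

Lemma mul_tr_sharpJ n (p q : 'M[C]_(d + d, n)) : J^T *m col_mx p q = q - p.
Proof.
by rewrite /sharpJ tr_col_mx mul_row_col raddfN /= !trmx1 mulNmx !mul1mx addrC.
Qed.

Lemma mul_sharpM A B n (u v : 'M[C]_(d + d, n)) :
  sharpM A B *m col_mx (T *m u) (T *m v) =
  col_mx (T *m (A *m u) - v) (u + T *m (B *m v)).
Proof. by rewrite /sharpM mul_block_col -!mulmxA mulNmx !mulKtheta. Qed.

Lemma sharp_eqn A B n (u v : 'M[C]_(d + d, n)) :
  sharp_defined A B -> T *m (v - u) = A *m u + B *m v ->
  sharp A B *m (u + T *m (B *m v)) = A *m u + B *m v.
Proof.
move=> unitM uv.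
have vE : v = T *m (A *m u) + (u + T *m (B *m v)).
  by rewrite addrCA -mulmxDr -uv mulKtheta addrC subrK.
have : sharpM A B *m col_mx (T *m u) (T *m v) = J *m (u + T *m (B *m v)).
  by rewrite mul_sharpJ mul_sharpM {1}vE opprD addrA subrr add0r.
by rewrite /sharp -!mulmxA => <-; rewrite mulKmx // mul_tr_sharpJ -mulmxBr.
Qed.

Lemma sharp_eqn_solvable A B n (y : 'M[C]_(d + d, n)) :
  sharp_defined A B -> exists u v,
  T *m (v - u) = A *m u + B *m v /\ u + T *m (B *m v) = y.
Proof.
move=> unitM; pose z := invmx (sharpM A B) *m (J *m y).
pose u := T *m usubmx z; pose v := T *m dsubmx z.
have zE : z = col_mx (T *m u) (T *m v) by rewrite !mulKtheta vsubmxK.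
have := mulKVmx unitM (J *m y); rewrite -/z zE mul_sharpM mul_sharpJ.
case/eq_col_mx => eq1 eq2; exists u, v; split=> //.
have -> : v - u = T *m (A *m u) + T *m (B *m v).
  by rewrite -[T *m (A *m u)](subrK v) eq1 -eq2 opprD addrAC addrNK addrC.
by rewrite mulmxDr !mulKtheta.
Qed.

Section Assoc.
Variables (A B E : 'M[C]_(d + d)) (n : nat) (u z1 z2 : 'M[C]_(d + d, n)).
Hypotheses (eqn1 : T *m (z1 - u) = A *m u + B *m z1)
           (eqn2 : T *m (z2 - z1) = B *m z1 + E *m z2).

Lemma sharpA_eqn_l : sharp_defined A B -> sharp_defined (sharp A B) E ->
  sharp (sharp A B) E *m (u + T *m (B *m z1) + T *m (E *m z2)) =
  A *m u + B *m z1 + E *m z2.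
Proof.
move=> unitAB unitABE; have eqnAB := sharp_eqn unitAB eqn1.
rewrite (sharp_eqn unitABE) ?eqnAB //.
have -> : z2 - (u + T *m (B *m z1)) = z2 - z1 + (z1 - u) - T *m (B *m z1).
  by rewrite addrA subrK opprD addrA.
by rewrite mulmxBr mulmxDr mulKtheta eqn2 eqn1 addrA addrK addrC addrA.
Qed.

Lemma sharpA_eqn_r : sharp_defined B E -> sharp_defined A (sharp B E) ->
  sharp A (sharp B E) *m (u + T *m (B *m z1) + T *m (E *m z2)) =
  A *m u + B *m z1 + E *m z2.
Proof.
move=> unitBE unitABE; have eqnBE := sharp_eqn unitBE eqn2.
rewrite -addrA -mulmxDr -eqnBE (sharp_eqn unitABE) ?eqnBE ?addrA //.
by rewrite [_ - u]addrAC mulmxDr eqn1 mulKtheta.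
Qed.

End Assoc.

Lemma sharp_assoc A B E :
  sharp_defined A B -> sharp_defined B E -> sharp_defined (sharp A B) E ->
  sharp_defined A (sharp B E) -> sharp (sharp A B) E = sharp A (sharp B E).
Proof.
move=> unitAB unitBE unitAB_E unitA_BE.
have [u [v [eqn eq1]]] := sharp_eqn_solvable 1%:M unitA_BE.
have [z1 [z2 [eqn2 eqv]]] := sharp_eqn_solvable v unitBE.
have eqnBE := sharp_eqn unitBE eqn2; rewrite eqv in eqnBE.
have eqn1 : T *m (z1 - u) = A *m u + B *m z1.
  apply: (addIr (E *m z2)); rewrite -addrA -eqnBE -eqn -eqv.
  by rewrite [z1 + _ - u]addrAC [RHS]mulmxDr mulKtheta.
have eq1' : u + T *m (B *m z1) + T *m (E *m z2) = 1%:M.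
  by rewrite -addrA -mulmxDr -eqnBE.
rewrite -[LHS]mulmx1 -[RHS]mulmx1 -eq1'.
by rewrite (sharpA_eqn_l eqn1 eqn2) ?(sharpA_eqn_r eqn1 eqn2).
Qed.

Lemma qnd_unitmxE A : (\det (1%:M + A *m T) != 0) = (A + T \in unitmx).
Proof.
rewrite -unitfE -unitmxE -[1%:M]thetaK -mulmxDl unitmx_mul theta_unit.
by rewrite andbT addrC.
Qed.

Lemma sharp_qnd A B : sharp_defined A B ->
  A + T \in unitmx -> B + T \in unitmx -> sharp A B + T \in unitmx.
Proof.
move=> unitM unitA unitB; apply: ker0_unitmx => y.
have [u [v [eqn <-]]] := sharp_eqn_solvable y unitM.
rewrite mulmxDl (sharp_eqn unitM eqn) -eqn -mulmxDr.
rewrite addrA subrK mulmxDr mulKtheta addrC -mulmxDl => /(unitmx_ker0 unitB) v0.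
move: eqn; rewrite v0 !mulmx0 addr0 sub0r mulmxN => /eqP.
rewrite eq_sym -subr_eq0 opprK -mulmxDl => /eqP /(unitmx_ker0 unitA) ->.
by rewrite addr0.
Qed.

End SharpEquations.

Section SharpAccretive.
Variables (C : numClosedFieldType) (d : nat).
Local Notation T := (theta C d).
Local Notation J := (sharpJ C d).
Local Notation cj := (map_mx (@Num.conj C)).
Implicit Types (A B : 'M[C]_(d + d)).

Lemma Re_hform_sharpM A B (p q : 'cV[C]_(d + d)) :
  'Re (hform (sharpM A B) (col_mx p q)) =
  'Re (hform A (T *m p)) + 'Re (hform B (T *m q)).
Proof.
have cross : 'Re (((cj q)^T *m T *m p) 0 0) = 'Re (((cj p)^T *m T *m q) 0 0).
  by rewrite -Re_conj conj_form adj_theta.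
rewrite !hform_mulmx adj_theta /hform /sharpM map_col_mx tr_col_mx mul_row_block.
rewrite mul_row_col !mulmxDl !mulmxA mulmxN mulNmx.
have entryD (M N : 'M[C]_1) : (M + N) 0 0 = M 0 0 + N 0 0 by rewrite mxE.
have entryN (M : 'M[C]_1) : (- M) 0 0 = - M 0 0 by rewrite mxE.
by rewrite !entryD entryN !raddfD raddfN /= cross addrA addrK.
Qed.

Lemma sharpM_accretive A B :
  accretive A -> accretive B -> accretive (sharpM A B).
Proof.
move=> accA accB z; rewrite -[z]vsubmxK Re_hform_sharpM col_mx_eq0 negb_and.
case/orP => [nz_p | nz_q].
  by rewrite ltr_pwDl ?accretive_ge0 // accA ?theta_eq0.
by rewrite ltr_pwDr ?accretive_ge0 // accB ?theta_eq0.
Qed.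

Lemma sharp_defined_accretive A B :
  accretive A -> accretive B -> sharp_defined A B.
Proof. by move=> accA accB; apply/accretive_unitmx/sharpM_accretive. Qed.

Lemma conj_sharpJ : cj J = J.
Proof. by rewrite map_col_mx map_mxN map_scalar_mx /= rmorph1. Qed.

Lemma sharp_accretive A B : accretive A -> accretive B -> accretive (sharp A B).
Proof.
move=> accA accB; rewrite /sharp -[in X in X^T]conj_sharpJ.
apply: accretive_mulmx; last exact/accretive_invmx/sharpM_accretive.
by move=> y; rewrite mul_sharpJ => /eqP; rewrite col_mx_eq0 => /andP[_ /eqP].
Qed.

Lemma sharp_sym A B : Defs.is_sym A -> Defs.is_sym B -> Defs.is_sym (sharp A B).
Proof.
move=> symA symB; have symM : (sharpM A B)^T = sharpM A B.
  rewrite tr_block_mx !trmx_mul symA symB raddfN /= tr_theta opprK.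
  by rewrite !mulmxN !mulNmx !opprK !mulmxA.
by rewrite /Defs.is_sym /sharp !trmx_mul trmxK trmx_inv symM mulmxA.
Qed.

Lemma sharp_SymPos A B : SymPos A -> SymPos B -> SymPos (sharp A B).
Proof.
move=> /SymPosE[symA accA] /SymPosE[symB accB].
by apply/SymPosE; split; [apply: sharp_sym | apply: sharp_accretive].
Qed.

End SharpAccretive.

Theorem mainTheorem4 (C : numClosedFieldType) (d : nat) (hd : (0 < d)%N) :
  (forall A B : 'M[C]_(d + d), SymPos A -> SymPos B ->
     sharp_defined A B /\ SymPos (sharp A B)) /\
  (forall A B E : 'M[C]_(d + d), SymPos A -> SymPos B -> SymPos E ->
     sharp (sharp A B) E = sharp A (sharp B E)) /\
  (forall A B : 'M[C]_(d + d), SymPosQnd A -> SymPosQnd B ->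
     SymPosQnd (sharp A B)).
Proof.
have defined A B : SymPos A -> SymPos B -> sharp_defined A B.
  by move=> /SymPosE[_ accA] /SymPosE[_ accB]; apply: sharp_defined_accretive.
split; first by move=> A B posA posB; split; [apply: defined | apply: sharp_SymPos].
split=> [A B E posA posB posE | A B [posA qndA] [posB qndB]].
  by apply: sharp_assoc; apply: defined => //; apply: sharp_SymPos.
split; first exact: sharp_SymPos.
by rewrite qnd_unitmxE sharp_qnd -?qnd_unitmxE //; apply: defined.
Qed.
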